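(* Let $m\ge1$ be an integer and $\delta_1>0$. There is $\delta_2=\delta_2(\delta_1)>0$ such that if $u\in E_0$ satisfies $E(u)\le 2E(Q)-\delta_1$, then $|u(r)|\le\pi-\delta_2$ for all $r\geq 0$.
   Context: $E(u)=\frac12\int_0^\infty\big(u_r^2+\frac{m^2\sin^2 u}{r^2}\big)r\,dr$; $Q(r)=\pi-2\arctan(r^m)$, so $E(Q)=2m$. $E_0=\{u:[0,\infty)\to\mathbb R\;:\;E(u)<2E(Q),\ \lim_{r\to0^+}u(r)=0,\ \lim_{r\to\infty}u(r)=0\}$. *)

From HB Require Import structures.
From mathcomp Require Import all_boot all_order all_algebra.
From mathcomp Require Import all_classical all_reals all_analysis.
Set Implicit Arguments. Unset Strict Implicit. Unset Printing Implicit Defensive.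
Import Order.TTheory GRing.Theory Num.Theory.
Import numFieldNormedType.Exports.
Local Open Scope classical_set_scope.
Local Open Scope ring_scope.

(* A function u : [0,oo) -> R (represented as R -> R, only values on [0,oo)
   matter) is locally absolutely continuous on (0,oo) with (weak / a.e.)
   derivative ur : ur is locally integrable on (0,oo) and
   u b - u a = \int_a^b ur for all 0 < a <= b. *)
Definition has_loc_deriv {R : realType} (u ur : R -> R) : Prop :=
  (forall a b : R, 0 < a -> a <= b ->
     (lebesgue_measure : measure _ _).-integrable `[a, b] (EFin \o ur)) /\
  (forall a b : R, 0 < a -> a <= b ->
     u b - u a = Rintegral lebesgue_measure `[a, b] ur).

Definition energy {R : realType} (m : nat) (u ur : R -> R) : \bar R :=
  (\int[lebesgue_measure]_(r in `]0%R, +oo[%classic)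
     (((ur r) ^+ 2 + (m%:R) ^+ 2 * (sin (u r)) ^+ 2 / r ^+ 2) * r / 2)%:E)%E.

(* E(Q) = 2m for Q(r) = pi - 2 arctan(r^m). *)
Definition energy_Q {R : realType} (m : nat) : R := 2 * m%:R.

(* u \in E_0 (with u_r its derivative): finite-energy class with
   E(u) < 2 E(Q), u(r) -> 0 as r -> 0+ and as r -> oo.  The value at r = 0
   is the continuous extension, u 0 = 0. *)
Definition in_E0 {R : realType} (m : nat) (u ur : R -> R) : Prop :=
  [/\ has_loc_deriv u ur,
      (energy m u ur < (2 * energy_Q m)%:E)%E,
      u 0 = 0,
      u x @[x --> 0^'+] --> 0
    & u x @[x --> +oo] --> 0].

From HB Require Import structures.
From mathcomp Require Import all_boot all_order all_algebra.
From mathcomp Require Import all_classical all_reals all_analysis.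
From mathcomp Require Import ring lra measurable_realfun.
Import Order.TTheory GRing.Theory Num.Theory.
Import numFieldNormedType.Exports.
Local Open Scope classical_set_scope.
Local Open Scope ring_scope.

(* Since u vanishes at 0 and at +oo, if |u| reached pi - d then cos u would
   climb down from about 1 to -cos d <= -1 + d and back up to about 1, a
   total variation of at least 4 - 4d.  By AM-GM the energy density
   dominates m |sin u| |u_r|, which controls the variation of cos u, so
   E(u) >= m (4 - 4d) = 2 E(Q) - 4 m d; for d <= delta1 / (8 m) this
   contradicts E(u) <= 2 E(Q) - delta1.  As u is only locally absolutely
   continuous, the chain-rule bound |cos u(b) - cos u(a)| <= \int_a^b
   |sin u| |u_r| is obtained from the mean value theorem on short intervals
   where u oscillates by less than an arbitrary eta > 0. *)

Section cos_bounds.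
Context {R : realType}.

Lemma cos_MVT (p q : R) : exists c, Num.min p q <= c <= Num.max p q /\
  cos q - cos p = - sin c * (q - p).
Proof.
wlog pq : p q / p <= q.
  move=> H; case/orP: (le_total p q) => [|qp]; first exact: H.
  have [c [cpq cqp]] := H q p qp; exists c.
  by rewrite minC maxC cpq -opprB cqp; split=> //; ring.
have cos_cont : {within `[p, q], continuous (@cos R)}.
  by apply: continuous_subspaceT => x; exact: continuous_cos.
have [c cpq ->] := MVT_segment pq (fun x _ => is_derive_cos x) cos_cont.
exists c; split => //; move: cpq; rewrite in_itv /=.
by rewrite (min_idPl pq) (max_idPr pq).
Qed.

Lemma sin_dist_le (a b : R) : `|sin a - sin b| <= `|a - b|.
Proof.
wlog ba : a b / b <= a.
  move=> H; case/orP: (le_total b a) => [|ab]; first exact: H.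
  by rewrite distrC [X in _ <= X]distrC; exact: H.
have sin_cont : {within `[b, a], continuous (@sin R)}.
  by apply: continuous_subspaceT => x; exact: continuous_sin.
have [c _ ->] := MVT_segment ba (fun x _ => is_derive_sin x) sin_cont.
by rewrite normrM ler_piMl // cos_max.
Qed.

Lemma cos_ge_1Bnorm (x : R) : 1 - `|x| <= cos x.
Proof.
have [c [_]] := cos_MVT 0 x; rewrite cos0 subr0 => cosx.
have := ler_norm (sin c * x); rewrite normrM.
have := ler_piMl (normr_ge0 x) (sin_max c); lra.
Qed.

Lemma cos_swings_ge {d x y z : R} : 0 <= d ->
  `|x| <= d -> `|y| = pi - d -> `|z| <= d ->
  4 - 4 * d <= `|cos y - cos x| + `|cos z - cos y|.
Proof.
move=> d0 xd yd zd.
have cosy : cos y = - cos d.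
  by rewrite -cos_norm yd cosB cospi sinpi mul0r addr0 mulN1r.
have := cos_ge_1Bnorm d; rewrite ger0_norm // => cosd.
have := cos_ge_1Bnorm x; have := cos_ge_1Bnorm z.
have := ler_norm (cos x - cos y); have := ler_norm (cos z - cos y).
rewrite [`|cos y - _|]distrC cosy; lra.
Qed.

End cos_bounds.

Lemma normrM_le_amgm {R : realFieldType} (p q x : R) : 0 < x ->
  `|p * q| <= (p ^+ 2 + q ^+ 2 / x ^+ 2) * x / 2.
Proof.
move=> x0; have xV : x * x^-1 = 1 by rewrite mulfV // gt_eqF.
rewrite -exprVn -[p ^+ 2]real_normK ?num_real //.
rewrite -[q ^+ 2]real_normK ?num_real //.
rewrite normrM; set P := `|p|; set Q := `|q|; set y := x^-1.
have := mulr_ge0 (sqr_ge0 (P - Q * y)) (ltW x0).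
have PQ : P * Q * (x * y) = P * Q by rewrite xV mulr1.
nra.
Qed.

Lemma dist_le_between {R : realDomainType} {p q c y eta : R} :
  Num.min p q <= c <= Num.max p q ->
  `|y - p| <= eta -> `|y - q| <= eta -> `|c - y| <= eta.
Proof.
case/orP: (le_total p q) => [pq|qp].
  rewrite (min_idPl pq) (max_idPr pq) !ler_norml; lra.
rewrite (min_idPr qp) (max_idPl qp) !ler_norml; lra.
Qed.

(* Unlike [ge0_subset_integral], no measurability is needed: both integrals
   are suprema over simple functions below [f], and [A `<=` B] only enlarges
   the set of competitors. *)
Lemma ge0_subset_integral_le d (T : measurableType d) (R : realType)
    (mu : {measure set T -> \bar R}) (A B : set T) (f : T -> \bar R) :
  (forall x, B x -> (0 <= f x)%E) -> A `<=` B ->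
  (\int[mu]_(x in A) f x <= \int[mu]_(x in B) f x)%E.
Proof.
move=> f0 AB; rewrite ge0_integralE; last by move=> x /AB /f0.
rewrite [leRHS]ge0_integralE //.
apply: le_ereal_sup => _ [h hf <-]; exists h => //= x.
apply: le_trans (hf x) _; rewrite /patch; case: ifPn => [|_].
  by rewrite !inE => /AB Bx; rewrite mem_set.
by case: ifPn => // /set_mem /f0.
Qed.

Section itv_integrals.
Context {R : realType}.
Local Notation mu := (@lebesgue_measure R).

Lemma ge0_integral_itv_ococ_split (f : R -> \bar R) (s t w : R) :
  s <= t -> t <= w -> measurable_fun `]s, w] f ->
  (forall x, `]s, w]%classic x -> (0 <= f x)%E) ->
  (\int[mu]_(x in `]s, w]) f x =
   \int[mu]_(x in `]s, t]) f x + \int[mu]_(x in `]t, w]) f x)%E.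
Proof.
move=> st tw mf f0.
have sw : `]s, w]%classic = `]s, t]%classic `|` `]t, w]%classic :> set R.
  by apply: itv_bndbnd_setU; rewrite bnd_simp.
rewrite sw ge0_integral_setU //; rewrite -?sw //.
apply/disj_setPS => x [] /=; rewrite !in_itv /= => /andP[_ xt] /andP[tx _].
by move: (lt_le_trans tx xt); rewrite ltxx.
Qed.

Lemma dist_le_integral_of_local (F g : R -> R) (a b d : R) :
  a <= b -> 0 < d -> measurable_fun `]a, b] g -> (forall x, 0 <= g x) ->
  (forall s t, a <= s -> s <= t -> t <= b -> t - s < d ->
     (`|F t - F s|%:E <= \int[mu]_(x in `]s, t]) (g x)%:E)%E) ->
  (`|F b - F a|%:E <= \int[mu]_(x in `]a, b]) (g x)%:E)%E.
Proof.
move=> ab d0 mg g0 local.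
have mgS s w : a <= s -> w <= b -> measurable_fun `]s, w] (EFin \o g).
  move=> aS wb; apply/measurable_EFinP; apply: measurable_funS mg => //= x.
  rewrite /= !in_itv /= => /andP[sx xw].
  by rewrite (le_lt_trans aS sx) (le_trans xw).
suff steps n s : a <= s -> s <= b -> b - s <= n%:R * (d / 2) ->
    (`|F b - F s|%:E <= \int[mu]_(x in `]s, b]) (g x)%:E)%E.
  have ba0 : 0 <= (b - a) / (d / 2) by apply: divr_ge0; lra.
  apply: (steps (Num.bound ((b - a) / (d / 2))) a) => //.
  by rewrite -ler_pdivrMr ?ltW ?archi_boundP //; lra.
elim: n s => [|n IH] s aS sb sn.
  have -> : s = b by move: sn; rewrite mul0r; lra.
  by rewrite subrr normr0; apply: integral_ge0 => x _; rewrite lee_fin.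
have [|dbs] := ltP (b - s) d; first exact: local.
pose t := s + d / 2.
have st : s <= t by rewrite /t; lra.
have tb : t <= b by rewrite /t; lra.
rewrite (@ge0_integral_itv_ococ_split _ s t b st tb (mgS _ _ aS (lexx b))).
  2: by move=> x _; rewrite lee_fin.
apply: le_trans (leeD (local s t aS st tb _) (IH t (le_trans aS st) tb _)).
- rewrite -EFinD lee_fin (_ : F b - F s = (F t - F s) + (F b - F t)).
    exact: ler_normD.
  by ring.
- by rewrite /t; lra.
- by move: sn; rewrite -natr1 /t; lra.
Qed.

End itv_integrals.

Section has_loc_deriv.
Context {R : realType} {u ur : R -> R}.
Hypothesis hu : has_loc_deriv u ur.
Local Notation mu := (@lebesgue_measure R).

Lemma has_loc_deriv_continuous {a b : R} : 0 < a -> a <= b ->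
  {within `[a, b], continuous u}.
Proof.
move=> a0 ab.
apply: (@subspace_eq_continuous _ _ _
  (fun x => u a + parameterized_integral mu a x ur)).
  move=> x; rewrite inE /= in_itv /= => /andP[ax _].
  by rewrite /parameterized_integral -(hu.2 a x a0 ax) addrC subrK.
move=> x; apply: cvgD; first exact: cvg_cst.
exact: parameterized_integral_continuous ab (hu.1 a b a0 ab) x.
Qed.

Lemma has_loc_deriv_uniform {a b eta : R} : 0 < a -> a <= b -> 0 < eta ->
  exists2 d, 0 < d & forall x y, a <= x -> x <= y -> y <= b -> y - x < d ->
    `|u y - u x| < eta.
Proof.
move=> a0 ab eta0.
have int_ur : mu.-integrable setT (EFin \o ur \_ `[a, b]).
  rewrite -restrict_EFin; apply/integrable_restrict => //=.
  by rewrite setTI; exact: hu.1.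
have [d [d0 small]] := integral_normr_continuous int_ur eta0.
exists d => // x y ax xy yb yxd.
rewrite (hu.2 x y (lt_le_trans a0 ax) xy).
apply: le_lt_trans (le_normr_Rintegral _ _) _ => //.
  exact: hu.1 (lt_le_trans a0 ax) xy.
have -> : \int[mu]_(t in `[x, y]) `|ur t| =
    \int[mu]_(t in `[x, y]) `|(ur \_ `[a, b]) t|.
  apply: eq_Rintegral => t; rewrite inE /= in_itv /= => /andP[xt ty].
  by rewrite patchE mem_set //= in_itv /= (le_trans ax xt) (le_trans ty yb).
apply: small => //; have /= -> := lebesgue_measure_itv `[x, y].
by case: ifP => _; rewrite ?lte_fin // -EFinD lte_fin.
Qed.

Lemma has_loc_deriv_integrable {a b : R} : 0 < a -> a <= b ->
  mu.-integrable `]a, b] (EFin \o ur).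
Proof.
move=> a0 ab; apply: integrableS (hu.1 a b a0 ab) => //.
by apply: subset_itvScc; rewrite bnd_simp.
Qed.

Lemma measurable_loc_deriv {a b : R} : 0 < a -> a <= b ->
  measurable_fun `]a, b] ur.
Proof.
by move=> a0 ab; have /integrableP[/measurable_EFinP] :=
  has_loc_deriv_integrable a0 ab.
Qed.

Lemma measurable_loc_prim {a b : R} : 0 < a -> a <= b ->
  measurable_fun `]a, b] u.
Proof.
move=> a0 ab; apply: (@measurable_funS _ _ _ _ `[a, b]) => //.
  by apply: subset_itvScc; rewrite bnd_simp.
apply: subspace_continuous_measurable_fun => //.
exact: has_loc_deriv_continuous.
Qed.

Lemma dist_le_integral_loc_deriv {a b : R} : 0 < a -> a <= b ->
  `|u b - u a| <= \int[mu]_(x in `]a, b]) `|ur x|.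
Proof.
move=> a0 ab; rewrite (hu.2 a b a0 ab).
rewrite -(Rintegral_itv_obnd_cbnd (has_loc_deriv_integrable a0 ab)).
exact/le_normr_Rintegral/has_loc_deriv_integrable.
Qed.

Lemma measurable_sin_loc_prim {a b : R} : 0 < a -> a <= b ->
  measurable_fun `]a, b] (fun x => `|sin (u x)|).
Proof.
move=> a0 ab; apply: (measurableT_comp (g := sin \o u)) => //.
apply: measurableT_comp; last exact: measurable_loc_prim a0 ab.
by apply: continuous_measurable_fun; exact: continuous_sin.
Qed.

(* By the MVT, [cos (u t) - cos (u s) = - sin c * (u t - u s)] with [c]
   between [u s] and [u t], hence within [eta] of every [u x], x in [s, t]. *)
Lemma cos_dist_le_local {s t eta : R} : 0 < s -> s <= t ->
  (forall x, s <= x <= t -> `|u x - u s| <= eta /\ `|u x - u t| <= eta) ->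
  (`|cos (u t) - cos (u s)|%:E <=
   \int[mu]_(x in `]s, t]) ((`|sin (u x)| + eta) * `|ur x|)%:E)%E.
Proof.
move=> s0 st osc.
have int_ur := integrable_abse (has_loc_deriv_integrable s0 st).
have mur := measurable_loc_deriv s0 st.
have [c [c_between ->]] := cos_MVT (u s) (u t).
rewrite normrM normrN.
apply: (@le_trans _ _ (`|sin c| * \int[mu]_(x in `]s, t]) `|ur x|)%:E).
  by rewrite lee_fin ler_wpM2l // dist_le_integral_loc_deriv.
rewrite EFinM /Rintegral fineK ?(integrable_fin_num _ int_ur) //.
rewrite -integralZl //; under eq_integral do rewrite -EFinM.
apply: ge0_le_integral => //.
- by apply/measurable_EFinP/measurable_funM => //; exact: measurableT_comp.
- apply/measurable_EFinP/measurable_funM; last exact: measurableT_comp.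
  exact: measurable_funD (measurable_sin_loc_prim s0 st) _.
move=> x; rewrite /= in_itv /= => /andP[sx xt]; rewrite lee_fin ler_wpM2r //.
have /osc[osc_s osc_t] : s <= x <= t by rewrite (ltW sx) xt.
have := dist_le_between c_between osc_s osc_t.
have := sin_dist_le c (u x); have := lerB_dist (sin c) (sin (u x)); lra.
Qed.

Lemma cos_dist_le_integral_eta {a b eta : R} : 0 < a -> a <= b -> 0 < eta ->
  (`|cos (u b) - cos (u a)|%:E <=
   \int[mu]_(x in `]a, b]) ((`|sin (u x)| + eta) * `|ur x|)%:E)%E.
Proof.
move=> a0 ab eta0.
have [d d0 unif] := has_loc_deriv_uniform a0 ab eta0.
apply: (@dist_le_integral_of_local _ (cos \o u) _ a b d) => //.
- apply: measurable_funM.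
    exact: measurable_funD (measurable_sin_loc_prim a0 ab) _.
  exact: measurableT_comp (measurable_loc_deriv a0 ab).
- by move=> x; rewrite mulr_ge0 // addr_ge0 // ltW.
move=> s t aS st tb tsd; apply: cos_dist_le_local => // [|x /andP[sx xt]].
  exact: lt_le_trans aS.
by split; [|rewrite distrC]; apply/ltW/unif; lra.
Qed.

Lemma cos_dist_le_integral {a b : R} : 0 < a -> a <= b ->
  (`|cos (u b) - cos (u a)|%:E <=
   \int[mu]_(x in `]a, b]) (`|sin (u x)| * `|ur x|)%:E)%E.
Proof.
move=> a0 ab; apply/lee_addgt0Pr => e e0.
have int_ur := integrable_abse (has_loc_deriv_integrable a0 ab).
have mur := measurable_loc_deriv a0 ab.
have msin := measurable_sin_loc_prim a0 ab.
set C := \int[mu]_(x in `]a, b]) `|ur x|.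
have C0 : 0 <= C by apply: Rintegral_ge0.
pose eta := e / (C + 1).
have eta0 : 0 < eta by rewrite divr_gt0 // ltr_wpDl.
apply: le_trans (cos_dist_le_integral_eta a0 ab eta0) _.
under eq_integral do rewrite mulrDl EFinD.
rewrite ge0_integralD //; last 3 first.
- by apply/measurable_EFinP/measurable_funM => //; exact: measurableT_comp.
- by move=> x _; rewrite lee_fin mulr_ge0 // ltW.
- by apply/measurable_EFinP/measurable_funM => //; exact: measurableT_comp.
apply: leeD => //; under eq_integral do rewrite EFinM.
rewrite integralZl // -(fineK (integrable_fin_num _ int_ur)) //.
rewrite -EFinM lee_fin -/(Rintegral _ _ _) -/C /eta.
rewrite mulrAC ler_pdivrMr ?ltr_wpDl // ler_pM2l //; lra.
Qed.

End has_loc_deriv.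

Definition energy_density {R : realType} (m : nat) (u ur : R -> R)
    (r : R) : R :=
  ((ur r) ^+ 2 + (m%:R) ^+ 2 * (sin (u r)) ^+ 2 / r ^+ 2) * r / 2.

Section energy_bounds.
Context {R : realType} (m : nat) {u ur : R -> R}.
Hypothesis hu : has_loc_deriv u ur.
Local Notation mu := (@lebesgue_measure R).
Local Notation energy_density := (energy_density m u ur).

Lemma sin_deriv_le_energy_density {r : R} : 0 < r ->
  m%:R * (`|sin (u r)| * `|ur r|) <= energy_density r.
Proof.
move=> r0; have := normrM_le_amgm (ur r) (m%:R * sin (u r)) r r0.
rewrite /energy_density exprMn !normrM (ger0_norm (ler0n _ _)); lra.
Qed.

Lemma energy_density_ge0 {r : R} : 0 < r -> 0 <= energy_density r.
Proof.
move=> r0; apply: le_trans (sin_deriv_le_energy_density r0).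
by rewrite !mulr_ge0.
Qed.

Lemma measurable_energy_density {a b : R} : 0 < a -> a <= b ->
  measurable_fun `]a, b] energy_density.
Proof.
move=> a0 ab.
have mu' := measurable_loc_prim hu a0 ab.
have mur := measurable_loc_deriv hu a0 ab.
have mV : measurable_fun `]a, b] (@GRing.inv R).
  apply: subspace_continuous_measurable_fun => //.
  apply: continuous_in_subspaceT => x; rewrite inE /= in_itv /= => /andP[ax _].
  by apply: inv_continuous; rewrite gt_eqF // (lt_trans a0 ax).
rewrite (_ : energy_density = fun x =>
  ((ur x) ^+ 2 + (m%:R) ^+ 2 * (sin (u x)) ^+ 2 * (x^-1) ^+ 2) * x / 2).
  apply: measurable_funM => //; apply: measurable_funM => //.
  apply: measurable_funD; first exact: measurable_funX mur.
  apply: measurable_funM; last exact: measurable_funX.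
  apply: measurable_funM => //; apply: measurable_funX.
  apply: measurableT_comp mu'.
  by apply: continuous_measurable_fun; exact: continuous_sin.
by apply: funext => x; rewrite /energy_density exprVn.
Qed.

Lemma cos_dist_le_energy_itv {a b : R} : 0 < a -> a <= b ->
  ((m%:R * `|cos (u b) - cos (u a)|)%:E <=
   \int[mu]_(x in `]a, b]) (energy_density x)%:E)%E.
Proof.
move=> a0 ab.
have msin := measurable_sin_loc_prim hu a0 ab.
have mur := measurable_loc_deriv hu a0 ab.
rewrite EFinM.
apply: le_trans (lee_wpmul2l _ (cos_dist_le_integral hu a0 ab)) _.
  by rewrite lee_fin.
rewrite -ge0_integralZl_EFin //; last first.
  by apply/measurable_EFinP/measurable_funM => //; exact: measurableT_comp.
under eq_integral do rewrite -EFinM.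
apply: ge0_le_integral => //.
- apply/measurable_EFinP/measurable_funM => //.
  by apply/measurable_funM => //; exact: measurableT_comp.
- by apply/measurable_EFinP; exact: measurable_energy_density.
move=> x; rewrite /= in_itv /= => /andP[ax _]; rewrite lee_fin.
exact/sin_deriv_le_energy_density/(lt_trans a0 ax).
Qed.

Lemma cos_swings_le_energy {a b c : R} : 0 < a -> a <= b -> b <= c ->
  ((m%:R * (`|cos (u b) - cos (u a)| + `|cos (u c) - cos (u b)|))%:E <=
   energy m u ur)%E.
Proof.
move=> a0 ab bc; have b0 := lt_le_trans a0 ab.
rewrite mulrDr EFinD.
have := leeD (cos_dist_le_energy_itv a0 ab) (cos_dist_le_energy_itv b0 bc).
move/le_trans; apply.
rewrite -ge0_integral_itv_ococ_split //; last 2 first.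
- apply/measurable_EFinP.
  exact: measurable_energy_density a0 (le_trans ab bc).
- move=> x; rewrite /= in_itv /= => /andP[ax _]; rewrite lee_fin.
  exact/energy_density_ge0/(lt_trans a0 ax).
apply: ge0_subset_integral_le => [x|x].
  by rewrite /= in_itv /= andbT => x0; rewrite lee_fin energy_density_ge0.
by rewrite /= !in_itv /= andbT => /andP[ax _]; exact: lt_trans ax.
Qed.

End energy_bounds.

Lemma in_E0_level_crossing {R : realType} {m : nat} {u ur : R -> R}
    {e L r : R} : in_E0 m u ur -> 0 < e -> e <= L -> 0 <= r -> L < `|u r| ->
  exists a b c, [/\ 0 < a, a <= b <= c, `|u a| < e, `|u b| = L & `|u c| < e].
Proof.
move=> [hu _ u0 u_at0 u_atoo] e0 eL r0 Lur.
have {r0} r0 : 0 < r.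
  rewrite lt_def r0 andbT; apply: contraTneq Lur => ->.
  by rewrite u0 normr0 -leNgt (le_trans (ltW e0)).
have [a [a0 ar ua]] : exists a, [/\ 0 < a, a < r & `|u a| < e].
  have : \forall x \near 0^'+, [/\ 0 < x, x < r & `|0 - u x| < e].
    near=> x; split; near: x; [exact: nbhs_right_gt | exact: nbhs_right_lt |].
    exact: cvgr_dist_lt u_at0 _ e0.
  by case/filter_ex => x [x0 xr]; rewrite sub0r normrN => ux; exists x.
have [c [rc uc]] : exists c, r < c /\ `|u c| < e.
  have : \forall x \near +oo, r < x /\ `|0 - u x| < e.
    near=> x; split; near: x; first exact/nbhs_pinfty_gt/num_real.
    exact: cvgr_dist_lt u_atoo _ e0.
  by case/filter_ex => x [rx]; rewrite sub0r normrN => ux; exists x.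
have [b] : exists2 b, b \in `[a, r] & `|u b| = L.
  have u_cont := has_loc_deriv_continuous hu a0 (ltW ar).
  apply: IVT (ltW ar) _ _; first by move=> x; apply: cvg_norm; exact: u_cont.
  by rewrite ge_min le_max (ltW (lt_le_trans ua eL)) (ltW Lur) orbT.
rewrite in_itv /= => /andP[ab br] ub; exists a, b, c; split => //.
by rewrite ab (le_trans br (ltW rc)).
Unshelve. all: by end_near.
Qed.

Theorem lemma2p1 (R : realType) (m : nat) (delta1 : R) :
  (1 <= m)%N -> 0 < delta1 ->
  exists delta2 : R, 0 < delta2 /\
    forall u ur : R -> R,
      in_E0 m u ur ->
      (energy m u ur <= (2 * energy_Q m - delta1)%:E)%E ->
      forall r : R, 0 <= r -> `|u r| <= pi - delta2.
Proof.
move=> m1 delta1_gt0.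
have m0 : 0 < m%:R :> R by rewrite ltr0n.
have pi0 := @pi_gt0 R.
pose d := Num.min (pi / 2) (delta1 / (8 * m%:R)).
have d_pi : d <= pi / 2 by rewrite ge_min lexx.
have d_delta1 : 4 * m%:R * d <= delta1 / 2.
  have -> : delta1 / 2 = 4 * m%:R * (delta1 / (8 * m%:R)).
    by field; rewrite gt_eqF.
  by rewrite ler_wpM2l ?mulr_ge0 // ge_min lexx orbT.
have d0 : 0 < d by rewrite lt_min divr_gt0 //= divr_gt0 // mulr_gt0.
exists d; split => // u ur hE0 Ele r r0; rewrite leNgt; apply/negP => ur_big.
have d_le : d <= pi - d by lra.
have [a [b [c [a0 /andP[ab bc] ua ub uc]]]] :=
  in_E0_level_crossing hE0 d0 d_le r0 ur_big.
have := cos_swings_ge (ltW d0) (ltW ua) ub (ltW uc).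
have [hu _ _ _ _] := hE0.
have := le_trans (cos_swings_le_energy m hu a0 ab bc) Ele.
rewrite lee_fin /energy_Q => energy_ge swings.
have := ler_wpM2l (ltW m0) swings; lra.
Qed.
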